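(* Let $0<T\le\infty$ and let $\varphi:[0,1]\times[0,T)\to\mathbb{R}$ be a smooth solution of $$\begin{cases}\varphi_t+r\varphi_r=\varphi_{rr}+\frac{\varphi_r}{r}-\frac{\sin(2\varphi)}{2r^2}, & 0<r<1,\\ \varphi(r,0)=\varphi_0(r), & 0<r<1,\\ \varphi(0,t)=0,\ \varphi(1,t)=\varphi_0(1), & t>0,\end{cases}$$ where $\varphi_0(0)=0$ and $-\pi\le\varphi_0(r)\le\pi$ for all $r\in[0,1]$. Then $-\pi<\varphi(r,t)<\pi$ for all $r\in(0,1)$ and $t\in(0,T)$. *)

From Stdlib Require Import Reals.
From Coquelicot Require Import Coquelicot.
Open Scope R_scope.

Definition in_dom (T : Rbar) (p : R * R) : Prop :=
  0 <= fst p <= 1 /\ 0 <= snd p /\ Rbar_lt (snd p) T.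

Definition in_int (T : Rbar) (r t : R) : Prop :=
  0 < r < 1 /\ 0 < t /\ Rbar_lt t T.

Definition cont_on_dom (T : Rbar) (phi : R -> R -> R) : Prop :=
  forall r t, in_dom T (r, t) ->
    filterlim (fun p : R * R => phi (fst p) (snd p))
              (within (in_dom T) (locally (r, t))) (locally (phi r t)).

Definition solves_pde (T : Rbar) (phi : R -> R -> R) : Prop :=
  exists phit phir phirr : R -> R -> R,
    forall r t, in_int T r t ->
      is_derive (fun s => phi r s) t (phit r t) /\
      is_derive (fun x => phi x t) r (phir r t) /\
      is_derive (fun x => phir x t) r (phirr r t) /\
      continuous (fun p : R * R => phit (fst p) (snd p)) (r, t) /\
      continuous (fun p : R * R => phir (fst p) (snd p)) (r, t) /\
      continuous (fun p : R * R => phirr (fst p) (snd p)) (r, t) /\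
      phit r t + r * phir r t
        = phirr r t + phir r t / r - sin (2 * phi r t) / (2 * r ^ 2).

Definition is_solution (T : Rbar) (phi0 : R -> R) (phi : R -> R -> R) : Prop :=
  cont_on_dom T phi /\
  solves_pde T phi /\
  (forall r, 0 < r < 1 -> phi r 0 = phi0 r) /\
  (forall t, 0 < t -> Rbar_lt t T -> phi 0 t = 0 /\ phi 1 t = phi0 1).

From Stdlib Require Import Reals Lra ClassicalEpsilon Classical.
From Coquelicot Require Import Coquelicot.
Open Scope R_scope.

(* A parabolic maximum principle, applied to phi and, since phi -> -phi maps
   solutions to solutions, to -phi.

   First, phi <= pi.  If phi <= pi up to time t, continuity keeps phi below
   3pi/2 a little longer; at an interior maximum above pi one would have
   phi_t >= 0, phi_r = 0, phi_rr <= 0 while sin (2 phi) > 0, which the equation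
   forbids.  A continuous induction in time propagates the bound.

   Then phi (r0, t0) < pi.  Choose a < r0 with phi (a, .) <= 1 and perturb phi
   on [a,1] x [0,t0] by the barrier w = e^(al (s t - r + 2a - 1)) - e^(al (a - 1)),
   with s t0 = 1 - a: w <= 0 at t = 0 and at r = 1, w < 1 at r = a, and
   w (r0, t0) > 0.  At an interior maximum of phi + w above pi, the bound
   -sin (2 phi) <= 2 (pi - phi) < 2 w, together with w_rr = al^2 (w + const),
   contradicts the equation once al exceeds s + 1/a + 1/a^2 + 1.  Hence
   phi (r0, t0) <= pi - w (r0, t0) < pi. *)

Lemma Rbar_lt_of_le_lt (T : Rbar) (t t0 : R) : t <= t0 -> Rbar_lt t0 T -> Rbar_lt t T.
Proof. intros h hT. apply (Rbar_le_lt_trans t t0 T); [exact h | exact hT]. Qed.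

Definition cont_rect (f : R -> R -> R) (a b c d : R) : Prop :=
  forall x y, a <= x <= b -> c <= y <= d -> forall eps, 0 < eps ->
  exists del, 0 < del /\ forall x' y', a <= x' <= b -> c <= y' <= d ->
    Rabs (x' - x) < del -> Rabs (y' - y) < del -> Rabs (f x' y' - f x y) < eps.

Lemma cont_rect_sub f a b c d a' b' c' d' :
  cont_rect f a b c d -> a <= a' -> b' <= b -> c <= c' -> d' <= d ->
  cont_rect f a' b' c' d'.
Proof.
  intros Hf ha hb hc hd x y hx hy eps heps.
  destruct (Hf x y ltac:(lra) ltac:(lra) eps heps) as [del [hdel Hdel]].
  exists del; split; [exact hdel|]. intros x' y' hx' hy'. apply Hdel; lra.
Qed.

Lemma cont_rect_plus f g a b c d :
  cont_rect f a b c d -> cont_rect g a b c d ->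
  cont_rect (fun x y => f x y + g x y) a b c d.
Proof.
  intros Hf Hg x y hx hy eps heps.
  destruct (Hf x y hx hy (eps / 2) ltac:(lra)) as [d1 [hd1 H1]].
  destruct (Hg x y hx hy (eps / 2) ltac:(lra)) as [d2 [hd2 H2]].
  assert (m1 := Rmin_l d1 d2). assert (m2 := Rmin_r d1 d2).
  exists (Rmin d1 d2); split; [now apply Rmin_pos|].
  intros x' y' hx' hy' ex ey.
  specialize (H1 x' y' hx' hy' ltac:(lra) ltac:(lra)).
  specialize (H2 x' y' hx' hy' ltac:(lra) ltac:(lra)).
  replace (f x' y' + g x' y' - (f x y + g x y))
    with ((f x' y' - f x y) + (g x' y' - g x y)) by ring.
  eapply Rle_lt_trans; [apply Rabs_triang | lra].
Qed.

Lemma cont_rect_of_filterlim (D : R * R -> Prop) f a b c d :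
  (forall x y, a <= x <= b -> c <= y <= d -> D (x, y)) ->
  (forall x y, a <= x <= b -> c <= y <= d ->
     filterlim (fun p : R * R => f (fst p) (snd p))
               (within D (locally (x, y))) (locally (f x y))) ->
  cont_rect f a b c d.
Proof.
  intros HD Hf x y hx hy eps heps.
  destruct (proj1 (filterlim_locally _ _) (Hf x y hx hy) (mkposreal eps heps))
    as [del Hdel].
  exists del; split; [apply cond_pos|].
  intros x' y' hx' hy' ex ey.
  apply (Hdel (x', y')); [split; assumption | apply HD; assumption].
Qed.

Lemma cont_rect_of_continuous f a b c d :
  (forall x y, continuous (fun p : R * R => f (fst p) (snd p)) (x, y)) ->
  cont_rect f a b c d.
Proof.
  intros Hf. apply (cont_rect_of_filterlim (fun _ => True)); [easy|].
  intros x y _ _. eapply filterlim_filter_le_1; [apply filter_le_within | apply Hf].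
Qed.

Lemma cont_rect_of_cont_on_dom T phi (t0 : R) :
  cont_on_dom T phi -> Rbar_lt t0 T -> cont_rect phi 0 1 0 t0.
Proof.
  intros Hphi hT.
  assert (Hdom : forall x y, 0 <= x <= 1 -> 0 <= y <= t0 -> in_dom T (x, y)).
  { intros x y hx hy. repeat split; simpl; try lra.
    apply (Rbar_lt_of_le_lt T y t0); [lra | exact hT]. }
  apply (cont_rect_of_filterlim (in_dom T)); [exact Hdom|].
  intros x y hx hy. apply Hphi, Hdom; assumption.
Qed.

Lemma cont_rect_unif f a b c d : cont_rect f a b c d -> forall eps, 0 < eps ->
  exists del, 0 < del /\ forall x y x' y', a <= x <= b -> c <= y <= d ->
    a <= x' <= b -> c <= y' <= d ->
    Rabs (x' - x) < del -> Rabs (y' - y) < del -> Rabs (f x' y' - f x y) < eps.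
Proof.
  intros Hf eps heps.
  assert (Hloc : forall p : R * R, exists del : posreal,
     a <= fst p <= b -> c <= snd p <= d ->
     forall x' y', a <= x' <= b -> c <= y' <= d ->
       Rabs (x' - fst p) < 2 * del -> Rabs (y' - snd p) < 2 * del ->
       Rabs (f x' y' - f (fst p) (snd p)) < eps / 2).
  { intros [u v]; simpl.
    destruct (classic (a <= u <= b /\ c <= v <= d)) as [[hu hv]|hout].
    - destruct (Hf u v hu hv (eps / 2) ltac:(lra)) as [del [hdel Hdel]].
      exists (mkposreal (del / 2) ltac:(lra)); simpl.
      intros _ _ x' y' hx' hy' ex ey. apply Hdel; auto; lra.
    - exists (mkposreal 1 Rlt_0_1). intros hu hv. tauto. }
  destruct (choice _ Hloc) as [delta Hdelta].
  destruct (compactness_value_2d a b c d (fun u v => delta (u, v))) as [d0 Hd0].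
  exists d0; split; [apply cond_pos|].
  intros x y x' y' hx hy hx' hy' ex ey.
  apply NNPP; intro Hneg. apply (Hd0 x y hx hy).
  intros [u [v [hu [hv [hxu [hyv hd0]]]]]]. apply Hneg.
  assert (near : forall z z' w, Rabs (z' - z) < d0 -> Rabs (z - w) < delta (u, v) ->
            Rabs (z' - w) < 2 * delta (u, v)).
  { intros z z' w h1 h2. replace (z' - w) with ((z' - z) + (z - w)) by ring.
    eapply Rle_lt_trans; [apply Rabs_triang | lra]. }
  pose proof (cond_pos (delta (u, v))) as hpos.
  pose proof (Hdelta (u, v) hu hv) as Huv; simpl in Huv.
  assert (Hxy := Huv x y hx hy ltac:(lra) ltac:(lra)).
  assert (Hxy' := Huv x' y' hx' hy' (near _ _ _ ex hxu) (near _ _ _ ey hyv)).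
  replace (f x' y' - f x y) with ((f x' y' - f u v) - (f x y - f u v)) by ring.
  eapply Rle_lt_trans; [apply Rabs_triang | rewrite Rabs_Ropp; lra].
Qed.

Lemma cont_rect_le_of_approx f a b c d x y k :
  cont_rect f a b c d -> a <= x <= b -> c <= y <= d ->
  (forall del, 0 < del -> exists y', c <= y' <= d /\ Rabs (y' - y) < del /\ f x y' <= k) ->
  f x y <= k.
Proof.
  intros Hf hx hy Happrox.
  destruct (Rle_or_lt (f x y) k) as [hle|hgt]; [exact hle|]. exfalso.
  destruct (Hf x y hx hy (f x y - k) ltac:(lra)) as [del [hdel Hdel]].
  destruct (Happrox del hdel) as [y' [hy' [hyy' hk]]].
  specialize (Hdel x y' hx hy' ltac:(rewrite Rminus_diag, Rabs_R0; lra) hyy').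
  apply Rabs_def2 in Hdel. lra.
Qed.

Lemma cont_rect_le_near_edge f t0 r0 :
  cont_rect f 0 1 0 t0 -> 0 < r0 <= 1 -> (forall t, 0 <= t <= t0 -> f 0 t <= 0) ->
  exists a, 0 < a < r0 /\ forall t, 0 <= t <= t0 -> f a t <= 1.
Proof.
  intros Hf hr0 Hedge.
  destruct (cont_rect_unif f 0 1 0 t0 Hf 1 Rlt_0_1) as [del [hdel Hunif]].
  assert (m1 := Rmin_l (del / 2) (r0 / 2)). assert (m2 := Rmin_r (del / 2) (r0 / 2)).
  assert (hm : 0 < Rmin (del / 2) (r0 / 2)) by (apply Rmin_pos; lra).
  exists (Rmin (del / 2) (r0 / 2)); split; [lra|]. intros t ht.
  assert (Hc := Hunif 0 t (Rmin (del / 2) (r0 / 2)) t ltac:(lra) ht ltac:(lra) ht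
                  ltac:(rewrite Rminus_0_r, Rabs_right; lra)
                  ltac:(rewrite Rminus_diag, Rabs_R0; lra)).
  apply Rabs_def2 in Hc. specialize (Hedge t ht). lra.
Qed.

Definition clamp (a b x : R) : R := Rmax a (Rmin b x).

Lemma clamp_in a b x : a <= b -> a <= clamp a b x <= b.
Proof. intros hab. unfold clamp, Rmax, Rmin. repeat destruct Rle_dec; lra. Qed.

Lemma clamp_id a b x : a <= x <= b -> clamp a b x = x.
Proof. intros hx. unfold clamp, Rmax, Rmin. repeat destruct Rle_dec; lra. Qed.

Lemma clamp_lip a b x y : a <= b -> Rabs (clamp a b x - clamp a b y) <= Rabs (x - y).
Proof.
  intros hab. unfold clamp, Rmax, Rmin, Rabs.
  repeat destruct Rle_dec; repeat destruct Rcase_abs; lra.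
Qed.

(* Composing with [clamp a b] makes [g] continuous on all of [R], as
   [continuity_ab_maj] requires. *)
Lemma cont_segment_max (g : R -> R) a b : a <= b ->
  (forall x, a <= x <= b -> forall eps, 0 < eps -> exists del, 0 < del /\
     forall x', a <= x' <= b -> Rabs (x' - x) < del -> Rabs (g x' - g x) < eps) ->
  exists xm, a <= xm <= b /\ forall x, a <= x <= b -> g x <= g xm.
Proof.
  intros hab Hg.
  assert (Hcont : forall z, continuity_pt (fun x => g (clamp a b x)) z).
  { intros z eps heps.
    destruct (Hg (clamp a b z) (clamp_in a b z hab) eps heps) as [del [hdel Hdel]].
    exists del; split; [exact hdel|]. intros x [_ hx]; simpl in *; unfold R_dist in *.
    apply Hdel; [now apply clamp_in|].
    eapply Rle_lt_trans; [apply clamp_lip; exact hab | exact hx]. }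
  destruct (continuity_ab_maj _ a b hab (fun z _ => Hcont z)) as [xm [Hmax hxm]].
  exists xm; split; [exact hxm|]. intros x hx.
  specialize (Hmax x hx). rewrite !clamp_id in Hmax; assumption.
Qed.

Lemma cont_rect_max f a b c d : cont_rect f a b c d -> a <= b -> c <= d ->
  exists xm ym, a <= xm <= b /\ c <= ym <= d /\
    forall x y, a <= x <= b -> c <= y <= d -> f x y <= f xm ym.
Proof.
  intros Hf hab hcd.
  assert (Hrow : forall y, exists xm, c <= y <= d ->
            a <= xm <= b /\ forall x, a <= x <= b -> f x y <= f xm y).
  { intros y. destruct (classic (c <= y <= d)) as [hy|hy]; [|exists a; tauto].
    destruct (cont_segment_max (fun x => f x y) a b hab) as [xm Hxm].
    - intros x hx eps heps. destruct (Hf x y hx hy eps heps) as [del [hdel Hdel]].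
      exists del; split; [exact hdel|]. intros x' hx' ex.
      apply Hdel; [assumption..| rewrite Rminus_diag, Rabs_R0; exact hdel].
    - exists xm; auto. }
  destruct (choice _ Hrow) as [X HX].
  destruct (cont_segment_max (fun y => f (X y) y) c d hcd) as [ym [hym Hym]].
  - intros y hy eps heps.
    destruct (cont_rect_unif f a b c d Hf (eps / 2) ltac:(lra)) as [del [hdel Hdel]].
    exists del; split; [exact hdel|]. intros y' hy' ey.
    destruct (HX y hy) as [hX HXy]. destruct (HX y' hy') as [hX' HXy'].
    assert (h0 : Rabs (X y - X y) < del) by (rewrite Rminus_diag, Rabs_R0; exact hdel).
    assert (h0' : Rabs (X y' - X y') < del) by (rewrite Rminus_diag, Rabs_R0; exact hdel).
    assert (E1 := Hdel (X y) y (X y) y' hX hy hX hy' h0 ey).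
    assert (E2 := Hdel (X y') y' (X y') y hX' hy' hX' hy h0' ltac:(rewrite Rabs_minus_sym; exact ey)).
    assert (M1 := HXy (X y') hX'). assert (M2 := HXy' (X y) hX).
    apply Rabs_def2 in E1. apply Rabs_def2 in E2. apply Rabs_def1; lra.
  - exists (X ym), ym. destruct (HX ym hym) as [hXm _].
    split; [exact hXm|]. split; [exact hym|]. intros x y hx hy.
    destruct (HX y hy) as [_ HXy].
    eapply Rle_trans; [apply HXy; exact hx | apply Hym; exact hy].
Qed.

Lemma continuous_induction (P : R -> Prop) (t0 : R) :
  P 0 ->
  (forall t, 0 < t <= t0 -> (forall s, 0 <= s < t -> P s) -> P t) ->
  (forall t, 0 <= t < t0 -> (forall s, 0 <= s <= t -> P s) ->
     exists e, 0 < e /\ forall s, t < s < t + e -> P s) ->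
  forall t, 0 <= t <= t0 -> P t.
Proof.
  intros H0 Hclosed Hopen t ht.
  set (E := fun s => 0 <= s <= t0 /\ forall u, 0 <= u <= s -> P u).
  assert (E0 : E 0) by (split; [lra | intros u hu; replace u with 0 by lra; exact H0]).
  destruct (completeness E) as [tau [Hub Hlub]].
  - exists t0. intros s [hs _]. lra.
  - exists 0. exact E0.
  assert (tau_ge0 : 0 <= tau) by (apply Hub, E0).
  assert (tau_le : tau <= t0) by (apply Hlub; intros s [hs _]; lra).
  assert (below : forall u, 0 <= u < tau -> P u).
  { intros u hu. apply NNPP; intro hPu.
    assert (tau <= u); [|lra].
    apply Hlub. intros s [hs Hs]. destruct (Rle_or_lt s u) as [hsu|hus]; [exact hsu|].
    exfalso; apply hPu, Hs; lra. }
  assert (upto : forall u, 0 <= u <= tau -> P u).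
  { intros u hu. destruct (Rlt_or_le u tau) as [hlt|hge]; [apply below; lra|].
    replace u with tau by lra.
    destruct (Req_dec tau 0) as [->|hne]; [exact H0|].
    apply Hclosed; [lra | exact below]. }
  destruct (Rlt_or_le tau t0) as [hlt|hge]; [|apply upto; lra].
  exfalso.
  destruct (Hopen tau ltac:(lra) upto) as [e [he He]].
  assert (m1 := Rmin_l t0 (tau + e / 2)). assert (m2 := Rmin_r t0 (tau + e / 2)).
  assert (hlt' : tau < Rmin t0 (tau + e / 2)) by (apply Rmin_glb_lt; lra).
  assert (Hnext : E (Rmin t0 (tau + e / 2))).
  { split; [lra|]. intros u hu.
    destruct (Rle_or_lt u tau) as [hle|hgt]; [apply upto; lra | apply He; lra]. }
  specialize (Hub _ Hnext). lra.
Qed.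

Lemma is_derive_increment_sign (f : R -> R) (x l : R) :
  is_derive f x l -> l <> 0 ->
  exists del, 0 < del /\ forall h, h <> 0 -> Rabs h < del -> 0 < (f (x + h) - f x) * h * l.
Proof.
  intros Hd hl. apply is_derive_Reals in Hd.
  destruct (Hd (Rabs l) (Rabs_pos_lt l hl)) as [del Hdel].
  exists del; split; [apply cond_pos|]. intros h hh hdel.
  specialize (Hdel h hh hdel).
  set (q := (f (x + h) - f x) / h) in Hdel.
  replace ((f (x + h) - f x) * h * l) with (q * l * (h * h)) by (unfold q; field; exact hh).
  apply Rmult_lt_0_compat.
  - apply Rabs_def2 in Hdel.
    destruct (Rle_or_lt 0 l) as [hl0|hl0];
      [rewrite Rabs_right in Hdel by lra | rewrite Rabs_left in Hdel by lra]; nra.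
  - destruct (Rle_or_lt 0 h); nra.
Qed.

Lemma is_derive_left_max (f : R -> R) (x l eta : R) :
  is_derive f x l -> 0 < eta -> (forall y, x - eta < y <= x -> f y <= f x) -> 0 <= l.
Proof.
  intros Hd heta Hmax. destruct (Rle_or_lt 0 l) as [hl|hl]; [exact hl|]. exfalso.
  destruct (is_derive_increment_sign f x l Hd ltac:(lra)) as [del [hdel Hinc]].
  assert (m1 := Rmin_l del eta). assert (m2 := Rmin_r del eta).
  assert (hm : 0 < Rmin del eta) by (apply Rmin_pos; assumption).
  set (h := - (Rmin del eta / 2)).
  specialize (Hinc h ltac:(unfold h; lra) ltac:(unfold h; rewrite Rabs_left; lra)).
  assert (f (x + h) <= f x) by (apply Hmax; unfold h; lra).
  assert (h < 0) by (unfold h; lra).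
  assert (0 < h * l) by nra.
  rewrite Rmult_assoc in Hinc. nra.
Qed.

Lemma is_derive_max (f : R -> R) (x l eta : R) :
  is_derive f x l -> 0 < eta -> (forall y, x - eta < y < x + eta -> f y <= f x) -> l = 0.
Proof.
  intros Hd heta Hmax. apply is_derive_Reals in Hd.
  pose (pr := exist _ l Hd : derivable_pt f x).
  rewrite <- (derive_pt_eq_0 f x l pr Hd).
  apply (deriv_maximum f (x - eta) (x + eta)); [lra | lra |].
  intros y hy1 hy2. apply Hmax; lra.
Qed.

Lemma is_derive2_max (f f' : R -> R) (x l eta : R) :
  0 < eta -> (forall y, x - eta < y < x + eta -> is_derive f y (f' y)) ->
  f' x = 0 -> is_derive f' x l ->
  (forall y, x - eta < y < x + eta -> f y <= f x) -> l <= 0.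
Proof.
  intros heta Hf' Hf'0 Hl Hmax. destruct (Rle_or_lt l 0) as [hl|hl]; [exact hl|]. exfalso.
  destruct (is_derive_increment_sign f' x l Hl ltac:(lra)) as [del [hdel Hinc]].
  assert (m1 := Rmin_l del eta). assert (m2 := Rmin_r del eta).
  assert (hm : 0 < Rmin del eta) by (apply Rmin_pos; assumption).
  set (h := Rmin del eta / 2).
  destruct (MVT_cor2 f f' x (x + h)) as [c [Hmvt hc]].
  - unfold h; lra.
  - intros c hc. apply is_derive_Reals, Hf'. unfold h in hc; lra.
  - assert (Hc := Hinc (c - x) ltac:(lra) ltac:(rewrite Rabs_right; unfold h in hc; lra)).
    replace (x + (c - x)) with c in Hc by ring. rewrite Hf'0, Rminus_0_r in Hc.
    assert (0 < f' c).
    { apply (Rmult_lt_reg_r ((c - x) * l)); [nra|].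
      rewrite Rmult_0_l, <- Rmult_assoc. exact Hc. }
    assert (f (x + h) <= f x) by (apply Hmax; unfold h; lra).
    assert (0 < h) by (unfold h; lra).
    nra.
Qed.

Lemma parabolic_max_conditions (F : R -> R -> R) (Fr : R -> R) (r t ft frr eta : R) :
  0 < eta ->
  is_derive (fun s => F r s) t ft ->
  (forall x, r - eta < x < r + eta -> is_derive (fun y => F y t) x (Fr x)) ->
  is_derive Fr r frr ->
  (forall x s, r - eta < x < r + eta -> t - eta < s <= t -> F x s <= F r t) ->
  0 <= ft /\ Fr r = 0 /\ frr <= 0.
Proof.
  intros heta Ht Hr Hrr Hmax.
  assert (Hr0 : Fr r = 0).
  { apply (is_derive_max (fun y => F y t) r (Fr r) eta); [apply Hr; lra | exact heta |].
    intros y hy. apply Hmax; lra. }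
  split; [|split; [exact Hr0|]].
  - apply (is_derive_left_max (fun s => F r s) t ft eta Ht heta).
    intros s hs. apply Hmax; lra.
  - apply (is_derive2_max (fun y => F y t) Fr r frr eta heta Hr Hr0 Hrr).
    intros y hy. apply Hmax; lra.
Qed.

Lemma sin_double_pos (p : R) : PI < p < PI + PI / 2 -> 0 < sin (2 * p).
Proof.
  intros hp. replace (2 * p) with ((2 * p - 2 * PI) + PI + PI) by ring.
  rewrite !neg_sin, Ropp_involutive. apply sin_gt_0; lra.
Qed.

Lemma sin_double_ge (p : R) : p <= PI -> - (2 * (PI - p)) <= sin (2 * p).
Proof.
  intros hp. set (y := 2 * PI - 2 * p).
  replace (2 * p) with (- y + PI + PI) by (unfold y; ring).
  rewrite !neg_sin, Ropp_involutive, sin_neg.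
  destruct (Req_dec y 0) as [hy|hy].
  - rewrite hy, sin_0. unfold y in hy. lra.
  - assert (sin y < y) by (apply sin_lt_x; unfold y in *; lra). unfold y in *. lra.
Qed.

Lemma pde_no_max_above_pi (r p pt pr prr : R) :
  0 < r -> PI < p < PI + PI / 2 -> 0 <= pt -> pr = 0 -> prr <= 0 ->
  pt + r * pr <> prr + pr / r - sin (2 * p) / (2 * r ^ 2).
Proof.
  intros hr hp hpt -> hprr Heq.
  assert (0 < sin (2 * p) / (2 * r ^ 2)) by (apply Rdiv_lt_0_compat; [apply sin_double_pos; lra | nra]).
  replace (0 / r) with 0 in Heq by (field; lra). lra.
Qed.

Lemma pde_no_max_with_barrier (a r p pt pr prr al s K : R) :
  0 < a <= r -> 0 < s -> 0 < K -> s + / a + / a * / a + 1 <= al ->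
  p <= PI -> PI - p < K ->
  - (al * s * K) <= pt -> pr = al * K -> prr <= - (al * al * K) ->
  pt + r * pr <> prr + pr / r - sin (2 * p) / (2 * r ^ 2).
Proof.
  intros ha hs hK hal hp hpK hpt -> hprr Heq.
  set (q := / r).
  assert (hq : 0 < q) by (apply Rinv_0_lt_compat; lra).
  assert (hqa : q <= / a) by (apply Rinv_le_contravar; lra).
  assert (hia : 0 < / a) by (apply Rinv_0_lt_compat; lra).
  replace (al * K / r) with (al * K * q) in Heq by (unfold q; field; lra).
  replace (sin (2 * p) / (2 * r ^ 2)) with (sin (2 * p) * (q * q) / 2) in Heq
    by (unfold q; field; lra).
  assert (Hsin : - (sin (2 * p) * (q * q) / 2) < K * (q * q)).
  { assert (- sin (2 * p) < 2 * K) by (pose proof (sin_double_ge p hp); lra).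
    assert (0 < q * q) by nra. nra. }
  assert (0 <= r * (al * K)) by (apply Rmult_le_pos; [lra | nra]).
  assert (Hineq : al * al * K < al * s * K + al * q * K + q * q * K) by nra.
  assert (al * al < al * s + al * q + q * q) by (apply (Rmult_lt_reg_r K); nra).
  nra.
Qed.

Definition barrier (al s a r t : R) : R :=
  exp (al * (s * t - r + 2 * a - 1)) - exp (al * (a - 1)).

Lemma exp_le_compat (x y : R) : x <= y -> exp x <= exp y.
Proof.
  intros hxy. destruct (Req_dec x y) as [->|hne]; [lra|].
  apply Rlt_le, exp_increasing. lra.
Qed.

Lemma barrier_nonpos al s a r t : 0 < al -> s * t - r + a <= 0 -> barrier al s a r t <= 0.
Proof.
  intros hal h. unfold barrier.
  assert (exp (al * (s * t - r + 2 * a - 1)) <= exp (al * (a - 1))); [|lra].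
  apply exp_le_compat, Rmult_le_compat_l; lra.
Qed.

Lemma barrier_pos al s a r t : 0 < al -> 0 < s * t - r + a -> 0 < barrier al s a r t.
Proof.
  intros hal h. unfold barrier.
  assert (exp (al * (a - 1)) < exp (al * (s * t - r + 2 * a - 1))); [|lra].
  apply exp_increasing, Rmult_lt_compat_l; lra.
Qed.

Lemma barrier_lt_one al s a r t : 0 < al -> s * t - r + 2 * a - 1 <= 0 -> barrier al s a r t < 1.
Proof.
  intros hal h. unfold barrier.
  assert (Hle : exp (al * (s * t - r + 2 * a - 1)) <= exp 0) by (apply exp_le_compat; nra).
  rewrite exp_0 in Hle.
  pose proof (exp_pos (al * (a - 1))). lra.
Qed.

Lemma cont_rect_barrier al s a a1 b1 c1 d1 : cont_rect (barrier al s a) a1 b1 c1 d1.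
Proof.
  apply cont_rect_of_continuous. intros x y. unfold barrier.
  apply (continuous_minus (V := R_NormedModule)
           (fun p : R * R => exp (al * (s * snd p - fst p + 2 * a - 1)))).
  2: apply continuous_const.
  apply (continuous_comp (fun p : R * R => al * (s * snd p - fst p + 2 * a - 1)) exp).
  2: apply (ex_derive_continuous (V := R_NormedModule) exp); auto_derive; auto.
  apply (continuous_mult (K := R_AbsRing) (fun _ => al)); [apply continuous_const|].
  apply (continuous_minus (V := R_NormedModule) (fun p : R * R => s * snd p - fst p + 2 * a));
    [|apply continuous_const].
  apply (continuous_plus (V := R_NormedModule) (fun p : R * R => s * snd p - fst p));
    [|apply continuous_const].
  apply (continuous_minus (V := R_NormedModule) (fun p : R * R => s * snd p));
    [|apply continuous_fst].
  apply (continuous_mult (K := R_AbsRing) (fun _ => s));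
    [apply continuous_const | apply continuous_snd].
Qed.

Lemma pde_at_max (T : Rbar) (phi w wr : R -> R -> R) (wt wrr a t1 r t : R) :
  solves_pde T phi ->
  0 <= a < r -> r < 1 -> 0 < t <= t1 -> Rbar_lt t1 T ->
  is_derive (fun s => w r s) t wt ->
  (forall x, is_derive (fun y => w y t) x (wr x t)) ->
  is_derive (fun x => wr x t) r wrr ->
  (forall x s, a <= x <= 1 -> 0 <= s <= t1 -> phi x s + w x s <= phi r t + w r t) ->
  exists pt pr prr, - wt <= pt /\ pr = - wr r t /\ prr <= - wrr /\
    pt + r * pr = prr + pr / r - sin (2 * phi r t) / (2 * r ^ 2).
Proof.
  intros [phit [phir [phirr Hpde]]] ha hr ht hT Hwt Hwr Hwrr Hmax.
  set (eta := Rmin (Rmin (r - a) (1 - r)) t).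
  assert (m1 := Rmin_l (Rmin (r - a) (1 - r)) t). assert (m2 := Rmin_r (Rmin (r - a) (1 - r)) t).
  assert (m3 := Rmin_l (r - a) (1 - r)). assert (m4 := Rmin_r (r - a) (1 - r)).
  assert (heta : 0 < eta) by (repeat apply Rmin_pos; lra).
  assert (Hint : forall x, r - eta < x < r + eta -> 0 < x < 1 /\ 0 < t /\ Rbar_lt t T).
  { intros x hx. unfold eta in *. repeat split; try lra.
    apply (Rbar_lt_of_le_lt T t t1); [lra | exact hT]. }
  destruct (Hpde r t (Hint r ltac:(lra))) as [Ht [Hr [Hrr [_ [_ [_ Heq]]]]]].
  destruct (parabolic_max_conditions (fun x s => phi x s + w x s) (fun x => phir x t + wr x t)
              r t (phit r t + wt) (phirr r t + wrr) eta heta) as [C1 [C2 C3]].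
  - apply (is_derive_plus (fun s => phi r s) (fun s => w r s)); assumption.
  - intros x hx. apply (is_derive_plus (fun y => phi y t) (fun y => w y t)); [|apply Hwr].
    apply (Hpde x t (Hint x hx)).
  - apply (is_derive_plus (fun x => phir x t) (fun x => wr x t)); assumption.
  - intros x s hx hs. apply Hmax; unfold eta in *; lra.
  - exists (phit r t), (phir r t), (phirr r t). repeat split; lra.
Qed.

Lemma solution_boundary_le T phi0 phi t0 :
  is_solution T phi0 phi -> 0 < t0 -> Rbar_lt t0 T ->
  forall t, 0 <= t <= t0 -> phi 0 t <= 0 /\ phi 1 t <= phi0 1.
Proof.
  intros [hc [_ [_ hbd]]] ht0 hT t ht.
  assert (Hpos : forall s, 0 < s <= t0 -> phi 0 s = 0 /\ phi 1 s = phi0 1).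
  { intros s hs. apply hbd; [lra | apply (Rbar_lt_of_le_lt T s t0); [lra | exact hT]]. }
  destruct (Req_dec t 0) as [->|hne].
  2: { destruct (Hpos t ltac:(lra)) as [-> ->]. lra. }
  assert (Happrox : forall x k, (forall s, 0 < s <= t0 -> phi x s = k) -> 0 <= x <= 1 ->
                      phi x 0 <= k).
  { intros x k Hk hx.
    apply (cont_rect_le_of_approx phi 0 1 0 t0); [|assumption|lra|].
    - apply (cont_rect_of_cont_on_dom T phi t0 hc hT).
    - intros del hdel. assert (m1 := Rmin_l (del / 2) t0). assert (m2 := Rmin_r (del / 2) t0).
      assert (hm : 0 < Rmin (del / 2) t0) by (apply Rmin_pos; lra).
      exists (Rmin (del / 2) t0). repeat split; try lra.
      + rewrite Rminus_0_r, Rabs_right; lra.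
      + rewrite Hk; lra. }
  split; apply Happrox; try lra; intros s hs; apply (Hpos s hs).
Qed.

Lemma solution_le_pi_step T phi0 phi t0 t :
  is_solution T phi0 phi -> phi0 1 <= PI -> 0 < t0 -> Rbar_lt t0 T -> 0 <= t < t0 ->
  (forall s, 0 <= s <= t -> forall r, 0 <= r <= 1 -> phi r s <= PI) ->
  exists e, 0 < e /\ forall s, t < s < t + e -> forall r, 0 <= r <= 1 -> phi r s <= PI.
Proof.
  intros hsol h1 ht0 hT ht Hle.
  pose proof hsol as [hc [hpde _]].
  assert (HK := cont_rect_of_cont_on_dom T phi t0 hc hT).
  assert (Hbd := solution_boundary_le T phi0 phi t0 hsol ht0 hT).
  assert (hpi := PI_RGT_0).
  destruct (cont_rect_unif phi 0 1 0 t0 HK (PI / 2) ltac:(lra)) as [del [hdel Hunif]].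
  assert (m1 := Rmin_l t0 (t + del / 2)). assert (m2 := Rmin_r t0 (t + del / 2)).
  set (t1 := Rmin t0 (t + del / 2)) in *.
  assert (ht1 : t < t1) by (apply Rmin_glb_lt; lra).
  destruct (cont_rect_max phi 0 1 0 t1 (cont_rect_sub phi 0 1 0 t0 0 1 0 t1 HK
              ltac:(lra) ltac:(lra) ltac:(lra) ltac:(lra)) ltac:(lra) ltac:(lra))
    as [rm [tm [hrm [htm Hmax]]]].
  exists (t1 - t); split; [lra|].
  enough (phi rm tm <= PI) by (intros s hs r hr; eapply Rle_trans; [apply Hmax|]; lra).
  destruct (Rle_or_lt (phi rm tm) PI) as [hle|hM]; [exact hle|]. exfalso.
  assert (htm' : t < tm).
  { destruct (Rle_or_lt tm t) as [h|h]; [|exact h].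
    specialize (Hle tm ltac:(lra) rm hrm). lra. }
  assert (hrm0 : rm <> 0) by (intros ->; specialize (Hbd tm ltac:(lra)); lra).
  assert (hrm1 : rm <> 1) by (intros ->; specialize (Hbd tm ltac:(lra)); lra).
  assert (hMup : phi rm tm < PI + PI / 2).
  { assert (Hc := Hunif rm t rm tm hrm ltac:(lra) hrm ltac:(lra)
                   ltac:(rewrite Rminus_diag, Rabs_R0; lra)
                   ltac:(rewrite Rabs_right; lra)).
    apply Rabs_def2 in Hc. specialize (Hle t ltac:(lra) rm hrm). lra. }
  destruct (pde_at_max T phi (fun _ _ => 0) (fun _ _ => 0) 0 0 0 t1 rm tm hpde)
    as [pt [pr [prr [Hpt [Hpr [Hprr Heq]]]]]].
  1-3: lra.
  - apply (Rbar_lt_of_le_lt T t1 t0); [lra | exact hT].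
  - apply (is_derive_const (V := R_NormedModule)).
  - intros x; apply (is_derive_const (V := R_NormedModule)).
  - apply (is_derive_const (V := R_NormedModule)).
  - intros x s hx hs. rewrite !Rplus_0_r. apply Hmax; lra.
  - revert Heq. apply (pde_no_max_above_pi rm (phi rm tm) pt pr prr); lra.
Qed.

Lemma solution_le_pi T phi0 phi t0 :
  is_solution T phi0 phi -> (forall r, 0 <= r <= 1 -> phi0 r <= PI) ->
  0 < t0 -> Rbar_lt t0 T ->
  forall r t, 0 <= r <= 1 -> 0 <= t <= t0 -> phi r t <= PI.
Proof.
  intros hsol hb ht0 hT r t hr ht. revert r hr.
  pose proof hsol as [hc [_ [hinit _]]].
  assert (HK := cont_rect_of_cont_on_dom T phi t0 hc hT).
  assert (Hbd := solution_boundary_le T phi0 phi t0 hsol ht0 hT).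
  assert (h1 := hb 1 ltac:(lra)). assert (hpi := PI_RGT_0).
  apply (continuous_induction (fun t => forall r, 0 <= r <= 1 -> phi r t <= PI) t0);
    [ | | intros s hs; apply (solution_le_pi_step T phi0 phi t0 s hsol h1 ht0 hT hs) | exact ht].
  - intros r hr. specialize (Hbd 0 ltac:(lra)).
    destruct (Req_dec r 0) as [->|h0]; [lra|].
    destruct (Req_dec r 1) as [->|h1']; [lra|].
    rewrite hinit by lra. apply hb; lra.
  - intros s hs Hbelow r hr.
    apply (cont_rect_le_of_approx phi 0 1 0 t0 r s PI HK hr ltac:(lra)).
    intros del hdel. assert (m1 := Rmin_l del s). assert (m2 := Rmin_r del s).
    assert (hm : 0 < Rmin del s) by (apply Rmin_pos; lra).
    exists (s - Rmin del s / 2). repeat split; try lra.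
    + rewrite Rabs_left; lra.
    + apply Hbelow; lra.
Qed.

Lemma solution_plus_barrier_le_pi T phi0 phi t0 a s al :
  is_solution T phi0 phi -> (forall r, 0 <= r <= 1 -> phi0 r <= PI) ->
  0 < t0 -> Rbar_lt t0 T -> 0 < a < 1 -> 0 < s -> s * t0 <= 1 - a ->
  s + / a + / a * / a + 1 <= al -> (forall t, 0 <= t <= t0 -> phi a t <= 1) ->
  forall r t, a <= r <= 1 -> 0 <= t <= t0 -> phi r t + barrier al s a r t <= PI.
Proof.
  intros hsol hb ht0 hT ha hs hst0 hal Ha.
  pose proof hsol as [hc [hpde _]].
  assert (Hbd := solution_boundary_le T phi0 phi t0 hsol ht0 hT).
  assert (Hle := solution_le_pi T phi0 phi t0 hsol hb ht0 hT).
  assert (hpi := PI2_3_2).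
  assert (hia : 0 < / a) by (apply Rinv_0_lt_compat; lra).
  assert (hal1 : 1 <= al) by nra.
  set (w := barrier al s a).
  destruct (cont_rect_max (fun r t => phi r t + w r t) a 1 0 t0) as [rm [tm [hrm [htm Hmax]]]].
  - apply cont_rect_plus; [|apply cont_rect_barrier].
    apply (cont_rect_sub phi 0 1 0 t0); [apply (cont_rect_of_cont_on_dom T); assumption | lra..].
  - lra.
  - lra.
  enough (phi rm tm + w rm tm <= PI) by (intros r t hr ht; eapply Rle_trans; [apply Hmax|]; lra).
  destruct (Rle_or_lt (phi rm tm + w rm tm) PI) as [hle|hM]; [exact hle|]. exfalso.
  assert (htm0 : tm <> 0).
  { intros ->. assert (phi rm 0 <= PI) by (apply Hle; lra).
    assert (w rm 0 <= 0) by (apply barrier_nonpos; lra). lra. }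
  assert (hrma : rm <> a).
  { intros ->. assert (phi a tm <= 1) by (apply Ha; lra).
    assert (w a tm < 1) by (apply barrier_lt_one; nra). lra. }
  assert (hrm1 : rm <> 1).
  { intros ->. assert (w 1 tm <= 0) by (apply barrier_nonpos; nra).
    specialize (Hbd tm ltac:(lra)). specialize (hb 1 ltac:(lra)). lra. }
  set (K := exp (al * (s * tm - rm + 2 * a - 1))).
  destruct (pde_at_max T phi w (fun x t => - (al * exp (al * (s * t - x + 2 * a - 1))))
              (al * s * K) (al * al * K) a t0 rm tm hpde)
    as [pt [pr [prr [Hpt [Hpr [Hprr Heq]]]]]]; [lra | lra | lra | exact hT | | | | exact Hmax |].
  - unfold w, barrier, K. auto_derive; [easy | unfold Rminus; ring].
  - intros x. unfold w, barrier. auto_derive; [easy | unfold Rminus; ring].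
  - unfold K. auto_derive; [easy | unfold Rminus; ring].
  - fold K in Hpr. revert Heq.
    apply (pde_no_max_with_barrier a rm (phi rm tm) pt pr prr al s K);
      [lra | exact hs | apply exp_pos | exact hal | apply Hle; lra | | exact Hpt | lra | exact Hprr].
    unfold w, barrier in hM. fold K in hM. pose proof (exp_pos (al * (a - 1))). lra.
Qed.

Lemma solution_lt_pi T phi0 phi :
  is_solution T phi0 phi -> (forall r, 0 <= r <= 1 -> phi0 r <= PI) ->
  forall r0 t0, 0 < r0 < 1 -> 0 < t0 -> Rbar_lt t0 T -> phi r0 t0 < PI.
Proof.
  intros hsol hb r0 t0 hr0 ht0 hT.
  pose proof hsol as [hc _].
  assert (HK := cont_rect_of_cont_on_dom T phi t0 hc hT).
  assert (Hedge : forall t, 0 <= t <= t0 -> phi 0 t <= 0)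
    by (intros t ht; apply (solution_boundary_le T phi0 phi t0 hsol ht0 hT t ht)).
  destruct (cont_rect_le_near_edge phi t0 r0 HK ltac:(lra) Hedge) as [a [ha Ha]].
  set (s := (1 - a) / t0).
  assert (hs : 0 < s) by (unfold s; apply Rdiv_lt_0_compat; lra).
  assert (hst0 : s * t0 = 1 - a) by (unfold s; field; lra).
  set (al := s + / a + / a * / a + 1).
  assert (hal : 0 < al) by (unfold al; pose proof (Rinv_0_lt_compat a ltac:(lra)); nra).
  assert (Hpos : 0 < barrier al s a r0 t0) by (apply barrier_pos; lra).
  assert (Hle := solution_plus_barrier_le_pi T phi0 phi t0 a s al hsol hb ht0 hT
                   ltac:(lra) hs ltac:(lra) ltac:(unfold al; lra) Ha r0 t0 ltac:(lra) ltac:(lra)).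
  lra.
Qed.

Lemma is_solution_opp T phi0 phi :
  is_solution T phi0 phi -> is_solution T (fun r => - phi0 r) (fun r t => - phi r t).
Proof.
  intros [hc [[phit [phir [phirr Hpde]]] [hinit hbd]]].
  split; [|split; [|split]].
  - intros r t hd. eapply filterlim_comp; [exact (hc r t hd)|].
    apply (filterlim_opp (V := R_NormedModule)).
  - exists (fun r t => - phit r t), (fun r t => - phir r t), (fun r t => - phirr r t).
    intros r t hi. destruct (Hpde r t hi) as [d1 [d2 [d3 [c1 [c2 [c3 Heq]]]]]].
    assert (hr : 0 < r) by apply hi.
    split; [|split; [|split; [|split; [|split; [|split]]]]].
    + apply (is_derive_opp (fun s => phi r s)); assumption.
    + apply (is_derive_opp (fun x => phi x t)); assumption.
    + apply (is_derive_opp (fun x => phir x t)); assumption.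
    + apply (continuous_opp (V := R_NormedModule) (fun p : R * R => phit (fst p) (snd p))); assumption.
    + apply (continuous_opp (V := R_NormedModule) (fun p : R * R => phir (fst p) (snd p))); assumption.
    + apply (continuous_opp (V := R_NormedModule) (fun p : R * R => phirr (fst p) (snd p))); assumption.
    + replace (2 * - phi r t) with (- (2 * phi r t)) by ring. rewrite sin_neg.
      field_simplify_eq; [|lra]. field_simplify_eq in Heq; [|lra]. lra.
  - intros r hr. rewrite hinit by assumption. reflexivity.
  - intros t h1 h2. destruct (hbd t h1 h2) as [-> ->]. split; ring.
Qed.

Theorem lemma4p1 (T : Rbar) (phi0 : R -> R) (phi : R -> R -> R)
  (hT : Rbar_lt 0 T)
  (h00 : phi0 0 = 0)
  (hbd : forall r, 0 <= r <= 1 -> - PI <= phi0 r <= PI)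
  (hsol : is_solution T phi0 phi) :
  forall r t, 0 < r < 1 -> 0 < t -> Rbar_lt t T -> - PI < phi r t < PI.
Proof.
  intros r t hr ht hTt. split.
  - assert (Hopp := solution_lt_pi T _ _ (is_solution_opp T phi0 phi hsol)
                      ltac:(intros x hx; specialize (hbd x hx); lra) r t hr ht hTt).
    lra.
  - exact (solution_lt_pi T phi0 phi hsol (fun x hx => proj2 (hbd x hx)) r t hr ht hTt).
Qed.
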